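(* Let $3\le q\le n$ be an integer, $\Lambda\subseteq\mathbb{Z}/q\mathbb{Z}$ non-empty, $\eta=|\mathrm{supp}\,\mathcal{D}_{q,\Lambda}|\cdot2^{-n}$, $\varepsilon\in[0,1]$, let $g\colon\{0,1\}^m\to\{0,1\}^n$ be $d$-local and $\mathcal{P}_g=g(\mathcal{U}^m)$. Suppose there are $r'\ge1$ non-connected neighborhoods $N_g(i_1),\dots,N_g(i_{r'})$ each of which is Type-1, i.e., with $s_a=|N_g(i_a)|$, the marginal $\mathcal{P}_g|_{N_g(i_a)}$ has total variation distance more than $\varepsilon$ from the uniform distribution $\mathcal{U}^{s_a}$. Then $$\|\mathcal{P}_g-\mathcal{D}_{q,\Lambda}\|\ge 1-\frac{2}{\eta}\exp\{-\varepsilon^2 r'/2\}.$$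
   Context: $\mathcal{U}^s$ is uniform on $\{0,1\}^s$. $\mathcal{D}_{q,\Lambda}$ is uniform over $x\in\{0,1\}^n$ with $|x|\bmod q\in\Lambda$ ($|x|$ the Hamming weight). $\mathcal{P}|_T$ is the marginal on coordinates $T$. A function $g$ is $d$-local if each output bit depends on at most $d$ input bits; $I_g(i)$ is the set of input coordinates on which output $i$ depends; $N_g(i)=\{j: I_g(j)\cap I_g(i)\neq\emptyset\}$. Neighborhoods are non-connected if the sets $\bigcup_{j\in N_g(i_a)}I_g(j)$ are pairwise disjoint. $\|\cdot\|$ is total variation distance. *)

From HB Require Import structures.
From mathcomp Require Import all_boot all_order all_algebra.
From mathcomp Require Import reals sequences exp.
Set Implicit Arguments. Unset Strict Implicit. Unset Printing Implicit Defensive.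
Import Order.TTheory GRing.Theory Num.Theory.
Local Open Scope ring_scope.

Definition bits (n : nat) := {ffun 'I_n -> bool}.

Definition flip (m : nat) (x : bits m) (j : 'I_m) : bits m :=
  [ffun k => if k == j then ~~ x k else x k].

Definition hweight (n : nat) (x : bits n) : nat := #|[set i | x i]|.

Definition depset (m n : nat) (g : bits m -> bits n) (i : 'I_n) : {set 'I_m} :=
  [set j | [exists x : bits m, g x i != g (flip x j) i]].

Definition is_local (m n d : nat) (g : bits m -> bits n) : Prop :=
  forall i, (#|depset g i| <= d)%N.

Definition nbhd (m n : nat) (g : bits m -> bits n) (i : 'I_n) : {set 'I_n} :=
  [set j | depset g j :&: depset g i != set0].

Definition nbhd_inputs (m n : nat) (g : bits m -> bits n) (i : 'I_n) : {set 'I_m} :=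
  \bigcup_(j in nbhd g i) depset g j.

(* distributions over a finite type are given by their pmf *)
Definition tvd (R : realType) (T : finType) (P Q : T -> R) : R :=
  2^-1 * \sum_(x : T) `|P x - Q x|.

Definition unif (R : realType) (T : finType) : T -> R := fun _ => (#|T|%:R)^-1.

Definition pushU (R : realType) (A B : finType) (f : A -> B) : B -> R :=
  fun y => #|[set a | f a == y]|%:R / #|A|%:R.

Definition Pg (R : realType) (m n : nat) (g : bits m -> bits n) : bits n -> R :=
  pushU R g.

Definition restr (n : nat) (S : {set 'I_n}) (x : bits n) :
  {ffun {i : 'I_n | i \in S} -> bool} := [ffun k => x (val k)].

(* marginal P|_S, a distribution on {0,1}^S (which has 2^|S| elements) *)
Definition marginal (R : realType) (n : nat) (S : {set 'I_n}) (P : bits n -> R)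
  : {ffun {i : 'I_n | i \in S} -> bool} -> R :=
  fun y => \sum_(x : bits n | restr S x == y) P x.

Definition suppD (n q : nat) (Lam : {set 'I_q}) : {set bits n} :=
  [set x : bits n | [exists l in Lam, (hweight x %% q)%N == val l]].

Arguments suppD : clear implicits.

Definition Dq (R : realType) (n q : nat) (Lam : {set 'I_q}) : bits n -> R :=
  fun x => if x \in suppD n q Lam then (#|suppD n q Lam|%:R)^-1 else 0.
Arguments Dq : clear implicits.
Arguments marginal R {n} S P _ : assert.
Arguments unif : clear implicits.
Arguments Pg R {m n} g _ : assert.
Arguments tvd {R T} P Q.

From HB Require Import structures.
From mathcomp Require Import all_boot all_order all_algebra.
From mathcomp Require Import reals sequences exp.
From mathcomp Require Import lra.
Import Order.TTheory GRing.Theory Num.Theory.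
Set Implicit Arguments. Unset Strict Implicit. Unset Printing Implicit Defensive.
Local Open Scope ring_scope.

(* For each neighbourhood [S a] let [t a] be the event on which the marginal of
   P_g on [S a] exceeds the uniform marginal; by hypothesis P_g (t a) exceeds
   U (t a) by more than eps, where U is uniform on {0,1}^n.  The tests read
   disjoint input bits, so they are independent under P_g, and disjoint output
   bits, so they are independent under U.  Hence the overlap sum_x min(P_g, U)
   = 1 - |P_g - U| is at most the Bhattacharyya coefficient of the joint law of
   the tests, a product of r' Bernoulli coefficients each at most
   exp(-eps^2/2).  Finally D_{q,Lambda} <= U / eta pointwise, so the overlap of
   P_g with D_{q,Lambda} is at most exp(-eps^2 r'/2) / eta. *)


Section Overlap.
Variables (R : realType) (T : finType).
Implicit Types (P Q : T -> R) (E : pred T).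

Definition overlap P Q : R := \sum_x Num.min (P x) (Q x).

Definition prob P E : R := \sum_(x | E x) P x.

Lemma tvd_overlap P Q : \sum_x P x = 1 -> \sum_x Q x = 1 ->
  tvd P Q = 1 - overlap P Q.
Proof.
move=> sP sQ; rewrite /tvd /overlap.
have absE (a b : R) : `|a - b| = a + b - 2 * Num.min a b.
  by case: lerP => h; rewrite ?distrC ?ger0_norm; lra.
under eq_bigr do rewrite absE.
rewrite !big_split /= sP sQ sumrN -mulr_sumr; set s := \sum_x _; lra.
Qed.

Lemma tvd_prob_gt P Q : \sum_x P x = \sum_x Q x ->
  tvd P Q = prob P (fun x => Q x < P x) - prob Q (fun x => Q x < P x).
Proof.
move=> sPQ; rewrite /tvd /prob !(big_mkcond (fun x => Q x < P x)) -sumrB /=.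
have absE (a b : R) : `|a - b| = 2 * (if b < a then a - b else 0) - (a - b).
  by case: ltrP => h; rewrite ?distrC ?ger0_norm; lra.
under eq_bigr do rewrite absE.
rewrite sumrB -mulr_sumr sumrB sPQ subrr subr0 mulrA mulVf ?mul1r ?pnatr_eq0 //.
by apply: eq_bigr => x _; case: ifP; rewrite ?subr0.
Qed.

Lemma prob_predC P E : \sum_x P x = 1 -> prob P (predC E) = 1 - prob P E.
Proof. by move=> sP; rewrite -sP /prob (bigID E predT) /= addrC addrK. Qed.

Lemma prob_ge0 P E : (forall x, 0 <= P x) -> 0 <= prob P E.
Proof. by move=> P0; apply: sumr_ge0. Qed.

Lemma prob_le1 P E : (forall x, 0 <= P x) -> \sum_x P x = 1 -> prob P E <= 1.
Proof.
move=> P0 sP; rewrite -sP /prob [leRHS](bigID E predT) /= lerDl.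
exact: sumr_ge0.
Qed.

Lemma overlap_le_scale P Q Q' (c : R) : (forall x, 0 <= P x) -> 1 <= c ->
  (forall x, Q x <= c * Q' x) -> overlap P Q <= c * overlap P Q'.
Proof.
move=> P0 c1 QQ'; rewrite /overlap mulr_sumr; apply: ler_sum => x _.
case: (lerP (P x) (Q' x)) => h; rewrite ge_min ?QQ' ?orbT //.
by rewrite ler_peMl.
Qed.

Lemma overlap_le_fibers (T' : finType) (Z : T -> T') P Q :
  overlap P Q <= \sum_(h : T') Num.min (prob P (fun x => Z x == h))
                                       (prob Q (fun x => Z x == h)).
Proof.
rewrite /overlap (partition_big Z predT) //=; apply: ler_sum => h _.
by rewrite le_min; apply/andP; split; apply: ler_sum => x _; rewrite ge_min lexx ?orbT.
Qed.

End Overlap.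

Definition Ex (R : realType) (T : finType) (F : T -> R) : R :=
  (#|T|%:R)^-1 * \sum_x F x.

Lemma prob_unif (R : realType) (T : finType) (E : pred T) :
  prob (unif R T) E = Ex (fun x => (E x)%:R).
Proof.
by rewrite /prob /Ex /unif big_mkcond mulr_sumr; apply: eq_bigr => x _; case: (E x);
  rewrite ?mulr1 ?mulr0.
Qed.

Lemma prob_pushU (R : realType) (A B : finType) (f : A -> B) (E : pred B) :
  prob (pushU R f) E = Ex (fun a => (E (f a))%:R).
Proof.
rewrite /prob /pushU /Ex -mulr_suml mulrC; congr (_ * _).
rewrite [RHS](partition_big f predT) //= big_mkcond /=; apply: eq_bigr => y _.
rewrite -sum1_card natr_sum; case: (boolP (E y)) => Ey.
  by apply: eq_big => [a|a]; rewrite inE // => /eqP ->; rewrite Ey.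
by rewrite big1 // => a /eqP ->; rewrite (negbTE Ey).
Qed.

Lemma natr_forall (R : realType) (I : finType) (c : pred I) :
  ([forall a, c a]%:R : R) = \prod_a (c a)%:R.
Proof.
case: (boolP [forall a, c a]) => [/forallP ca | /forallPn[a /negbTE ca]].
  by rewrite big1 // => a _; rewrite ca.
by rewrite (bigD1 a) //= ca mul0r.
Qed.

Section Independence.
Variables (R : realType) (J : finType).
Local Notation X := {ffun J -> bool}.

Definition determined_by (Y : Type) (F : X -> Y) (S : {set J}) : Prop :=
  forall x y : X, {in S, x =1 y} -> F x = F y.

Lemma card_ffun_bool_neq0 : (#|X|%:R : R) != 0.
Proof. by rewrite pnatr_eq0 -lt0n; apply/card_gt0P; exists [ffun => false]. Qed.

Lemma Ex_const1 : Ex (fun _ : X => 1 : R) = 1.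
Proof. by rewrite /Ex sumr_const mulVf // card_ffun_bool_neq0. Qed.

(* Swapping the [S]-coordinates of a pair of points is a bijection of [X * X]
   which decouples a function of the [S]-coordinates from one of the others. *)
Lemma Ex_mul_indep (F G : X -> R) (S S' : {set J}) :
  determined_by F S -> determined_by G S' -> [disjoint S & S'] ->
  Ex (fun x => F x * G x) = Ex F * Ex G.
Proof.
move=> dF dG dSS'.
pose mix (x y : X) : X := [ffun j => if j \in S then x j else y j].
pose swap (p : X * X) := (mix p.1 p.2, mix p.2 p.1).
have swapK : involutive swap.
  by case=> x y; congr pair; apply/ffunP => j; rewrite !ffunE; case: (j \in S).
have sum_pair (H : X * X -> R) : \sum_p H p = \sum_x \sum_y H (x, y).
  by rewrite pair_bigA; apply: eq_bigr => -[].
have decouple : (\sum_x F x) * (\sum_y G y) = \sum_(p : X * X) F p.1 * G p.1.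
  rewrite [RHS](reindex_inj (inv_inj swapK)) big_distrl sum_pair.
  apply: eq_bigr => x _; rewrite big_distrr; apply: eq_bigr => y _ /=.
  congr (_ * _); first by apply: dF => j jS; rewrite ffunE jS.
  by apply: dG => j jS'; rewrite ffunE (disjointFl dSS' jS').
rewrite /Ex mulrACA decouple sum_pair /=.
under [in RHS]eq_bigr do rewrite sumr_const -mulr_natr.
by rewrite -mulr_suml -!mulrA mulrCA mulVf ?mulr1 // card_ffun_bool_neq0.
Qed.

Lemma Ex_prod_indep (I : finType) (F : I -> X -> R) (S : I -> {set J}) :
  (forall a, determined_by (F a) (S a)) ->
  (forall a b, a != b -> [disjoint S a & S b]) ->
  Ex (fun x => \prod_a F a x) = \prod_a Ex (F a).
Proof.
move=> dF dS; elim: (index_enum I) (index_enum_uniq I).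
  move=> _; rewrite big_nil -[RHS]Ex_const1.
  by congr (_ * _); apply: eq_bigr => x _; rewrite big_nil.
move=> a s IHs /= /andP[aNs uniq_s].
rewrite big_cons -IHs //.
have -> : Ex (fun x => \prod_(b <- a :: s) F b x) =
          Ex (fun x => F a x * \prod_(b <- s) F b x).
  by congr (_ * _); apply: eq_bigr => x _; rewrite big_cons.
apply: (Ex_mul_indep (dF a) (S' := \bigcup_(b in s) S b)).
  move=> x y xy; apply: eq_big_seq => b bs; apply: dF => j jb; apply: xy.
  by apply/bigcupP; exists b.
apply/bigcup_disjointP => b bs.
by apply: dS; apply: contraNneq aNs => ->.
Qed.

Lemma sum_unif_ffun_bool : \sum_x unif R X x = 1.
Proof. by rewrite /unif sumr_const -[LHS]mulr_natr mulVf ?card_ffun_bool_neq0. Qed.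

Lemma prob_unif_forall_indep (I : finType) (E : I -> pred X) (S : I -> {set J}) :
  (forall a, determined_by (E a) (S a)) ->
  (forall a b, a != b -> [disjoint S a & S b]) ->
  prob (unif R X) (fun x => [forall a, E a x]) = \prod_a prob (unif R X) (E a).
Proof.
move=> dE dS; rewrite prob_unif.
transitivity (Ex (fun x => \prod_a ((E a x)%:R : R))).
  by congr (_ * _); apply: eq_bigr => x _; rewrite natr_forall.
rewrite (Ex_prod_indep _ dS) => [|a x y xy]; last by rewrite (dE a x y xy).
by apply: eq_bigr => a _; rewrite prob_unif.
Qed.

End Independence.

Section IndependentTests.
Variable R : realType.

Lemma minr_le_sqr (x y c : R) : 0 <= x -> 0 <= y -> 0 <= c -> x * y <= c ^+ 2 ->
  Num.min x y <= c.
Proof.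
move=> x0 y0 c0 xyc; rewrite -(ler_pXn2r (n := 2)) ?nnegrE ?le_min ?x0 ?y0 //.
apply: le_trans xyc; rewrite expr2.
by case: (lerP x y) => h; apply: ler_pM; rewrite // ltW.
Qed.

(* [2 s t <= p (1 - p) + u (1 - u)] by AM-GM, hence [(s + t)^2 <= 1 - (p - u)^2]. *)
Lemma bhattacharyya_bernoulli_le (p u eps : R) : 0 <= p <= 1 -> 0 <= u <= 1 ->
  0 <= eps -> eps < p - u ->
  Num.sqrt (p * u) + Num.sqrt ((1 - p) * (1 - u)) <= expR (- eps ^+ 2 / 2).
Proof.
move=> /andP[p0 p1] /andP[u0 u1] eps0 gap.
set s := Num.sqrt (p * u); set t := Num.sqrt ((1 - p) * (1 - u)).
have s0 : 0 <= s := sqrtr_ge0 _.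
have t0 : 0 <= t := sqrtr_ge0 _.
have s2 : s ^+ 2 = p * u by rewrite sqr_sqrtr // mulr_ge0.
have t2 : t ^+ 2 = (1 - p) * (1 - u) by rewrite sqr_sqrtr // mulr_ge0 // subr_ge0.
have amgm : 2 * (s * t) <= p * (1 - p) + u * (1 - u).
  have pp0 : 0 <= p * (1 - p) by rewrite mulr_ge0 // subr_ge0.
  have uu0 : 0 <= u * (1 - u) by rewrite mulr_ge0 // subr_ge0.
  have st0 : 0 <= 2 * (s * t) by rewrite !mulr_ge0.
  rewrite -(ler_pXn2r (n := 2)) ?nnegrE ?addr_ge0 // exprMn exprMn s2 t2.
  have := sqr_ge0 (p * (1 - p) - u * (1 - u)); nra.
have eps2 : eps ^+ 2 <= (p - u) ^+ 2 by rewrite ler_pXn2r ?nnegrE //; lra.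
rewrite -(ler_pXn2r (n := 2)) ?nnegrE ?addr_ge0 ?expR_ge0 // -expRM_natr.
rewrite mulrC mulrCA divff ?pnatr_eq0 // mulr1.
apply: le_trans (expR_ge1Dx _); rewrite sqrrD s2 t2; nra.
Qed.

Variables (T I : finType) (P Q : T -> R) (t : I -> pred T) (eps : R).
Hypotheses (P_ge0 : forall x, 0 <= P x) (Q_ge0 : forall x, 0 <= Q x).
Hypotheses (sumP : \sum_x P x = 1) (sumQ : \sum_x Q x = 1).
Hypothesis P_indep : forall h : {ffun I -> bool},
  prob P (fun x => [forall a, t a x == h a]) = \prod_a prob P (fun x => t a x == h a).
Hypothesis Q_indep : forall h : {ffun I -> bool},
  prob Q (fun x => [forall a, t a x == h a]) = \prod_a prob Q (fun x => t a x == h a).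
Hypothesis eps_ge0 : 0 <= eps.
Hypothesis tests_gap : forall a, eps < prob P (t a) - prob Q (t a).

Lemma overlap_le_indep_tests : overlap P Q <= expR (- eps ^+ 2 / 2) ^+ #|I|.
Proof.
pose pr (D : T -> R) a b := prob D (fun x => t a x == b).
have pr_ge0 D a b : (forall x, 0 <= D x) -> 0 <= pr D a b by move=> D0; apply: prob_ge0.
have fiberE (D : T -> R) h : prob D (fun x => [ffun a => t a x] == h) =
                  prob D (fun x => [forall a, t a x == h a]).
  apply: eq_bigl => x; apply/eqP/forallP => [<- a | th]; first by rewrite ffunE.
  by apply/ffunP => a; rewrite ffunE; apply/eqP.
apply: le_trans (overlap_le_fibers (fun x => [ffun a => t a x]) P Q) _.
(* Bounding each [min] by a geometric mean yields a Bhattacharyya coefficient,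
   which factorises over the independent tests. *)
have fibers_le : \sum_h Num.min (prob P (fun x => [ffun a => t a x] == h))
                                 (prob Q (fun x => [ffun a => t a x] == h))
    <= \sum_(h : {ffun I -> bool}) \prod_a Num.sqrt (pr P a (h a) * pr Q a (h a)).
  apply: ler_sum => h _; rewrite !fiberE P_indep Q_indep.
  apply: minr_le_sqr.
  - by apply: prodr_ge0 => a _; apply: pr_ge0.
  - by apply: prodr_ge0 => a _; apply: pr_ge0.
  - by apply: prodr_ge0 => a _; apply: sqrtr_ge0.
  rewrite -prodrXl -big_split le_eqVlt; apply/orP; left; apply/eqP.
  by apply: eq_bigr => a _; rewrite sqr_sqrtr // mulr_ge0 ?pr_ge0.
apply: le_trans fibers_le _.
rewrite -(bigA_distr_bigA (fun a b => Num.sqrt (pr P a b * pr Q a b))) -prodr_const.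
apply: ler_prod => a _; rewrite sumr_ge0 => [|b _]; last exact: sqrtr_ge0.
have pr_true D : pr D a true = prob D (t a) by apply: eq_bigl => x; rewrite eqb_id.
have pr_false D : \sum_x D x = 1 -> pr D a false = 1 - prob D (t a).
  by move=> sD; rewrite -prob_predC //; apply: eq_bigl => x; rewrite eqbF_neg.
rewrite big_bool /= !pr_true !pr_false //.
by apply: bhattacharyya_bernoulli_le; rewrite ?prob_ge0 ?prob_le1.
Qed.
End IndependentTests.

Section Marginals.
Variables (R : realType) (n : nat).
Implicit Types (S : {set 'I_n}) (P : bits n -> R).

Lemma prob_marginal S P (E : pred {ffun {i : 'I_n | i \in S} -> bool}) :
  prob (marginal R S P) E = prob P (fun x => E (restr S x)).
Proof.
rewrite /prob /marginal [RHS](partition_big (restr S) E) //=.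
by apply: eq_bigr => y Ey; apply: eq_bigl => x; case: eqP => [->|]; rewrite ?Ey ?andbF.
Qed.

Lemma sum_marginal S P : \sum_y marginal R S P y = \sum_x P x.
Proof. exact: (prob_marginal P predT). Qed.

Lemma card_restr_fiber S (y1 y2 : {ffun {i : 'I_n | i \in S} -> bool}) :
  #|[set x | restr S x == y1]| = #|[set x | restr S x == y2]|.
Proof.
pose z : bits n := [ffun i => if insub i is Some k then y1 k (+) y2 k else false].
pose shift (x : bits n) : bits n := [ffun i => x i (+) z i].
have shiftK : involutive shift by move=> x; apply/ffunP => i; rewrite !ffunE addbK.
have restr_shift x : restr S (shift x) = [ffun k => restr S x k (+) (y1 k (+) y2 k)].
  by apply/ffunP => k; rewrite !ffunE valK.
rewrite -(card_imset _ (inv_inj shiftK)); apply: eq_card => x.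
rewrite -[x in LHS]shiftK mem_imset ?inE ?restr_shift; last exact: inv_inj shiftK.
apply/eqP/eqP => [/ffunP xy1 | <-]; apply/ffunP => k; last by rewrite ffunE addbCA addbb addbF.
by move: (xy1 k); rewrite ffunE; case: (restr S x k) (y1 k) (y2 k) => [] [] [].
Qed.

Lemma marginal_unif S y :
  marginal R S (unif R (bits n)) y = unif R {ffun {i : 'I_n | i \in S} -> bool} y.
Proof.
set fiber := #|[set x | restr S x == y]|.
have card_bits : #|bits n| = (#|{ffun {i : 'I_n | i \in S} -> bool}| * fiber)%N.
  rewrite -sum1_card (partition_big (restr S) predT) //= -sum_nat_const.
  apply: eq_bigr => y' _; rewrite /fiber (card_restr_fiber y y') -sum1_card.
  by apply: eq_bigl => x; rewrite inE.
rewrite /marginal /unif sumr_const.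
have -> : #|[pred x | restr S x == y]| = fiber by apply: eq_card => x; rewrite inE.
have := @card_ffun_bool_neq0 R 'I_n; rewrite card_bits natrM mulf_eq0 negb_or.
by case/andP => _ fiber_neq0; rewrite invfM -[LHS]mulr_natr mulfVK.
Qed.
End Marginals.

Lemma determined_by_depset m n (g : bits m -> bits n) (i : 'I_n) :
  determined_by (fun x => g x i) (depset g i).
Proof.
move=> x y; move Hk : #|[set j | x j != y j]| => k.
elim: k x Hk => [|k IHk] x Hk xy.
  suff -> : x = y by [].
  apply/ffunP => j; apply/eqP; apply: contraT => xyj.
  by move: Hk => /eqP; rewrite cards_eq0 => /eqP/setP/(_ j); rewrite !inE xyj.
have [j xyj] : exists j, j \in [set j | x j != y j].
  by apply/set0Pn; rewrite -card_gt0 Hk.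
have jNdep : j \notin depset g i.
  by apply: contraNN (_ : x j != y j) => [jd|]; [rewrite xy | rewrite inE in xyj].
have -> : g x i = g (flip x j) i.
  by move: jNdep; rewrite inE negb_exists => /forallP /(_ x); rewrite negbK => /eqP.
apply: IHk => [|j' j'd].
  have -> : [set j' | flip x j j' != y j'] = [set j | x j != y j] :\ j.
    apply/setP => j'; rewrite !inE ffunE.
    have [->|//] := eqVneq j' j; rewrite inE in xyj.
    by move: xyj; case: (x j); case: (y j).
  by rewrite (cardsD1 j) xyj in Hk; case: Hk.
rewrite ffunE; case: eqP => [j'j|_]; last exact: xy.
by rewrite -j'j j'd in jNdep.
Qed.

Lemma disjoint_nbhd m n (g : bits m -> bits n) (i i' : 'I_n) :
  [disjoint nbhd_inputs g i & nbhd_inputs g i'] -> [disjoint nbhd g i & nbhd g i'].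
Proof.
move=> dii'; apply/pred0P => j /=; apply/negbTE/andP => -[ji ji'].
move: (ji); rewrite inE => /set0Pn[k /setIP[kj _]].
have sub_inputs i0 : j \in nbhd g i0 -> k \in nbhd_inputs g i0.
  by move=> ji0; apply/bigcupP; exists j.
by have := disjointFr dii' (sub_inputs _ ji); rewrite sub_inputs.
Qed.

Section LocalFunction.
Variables (R : realType) (m n : nat) (g : bits m -> bits n).
Variables (I : finType) (S : I -> {set 'I_n}).
Hypothesis S_disjoint : forall a b, a != b -> [disjoint S a & S b].
Hypothesis inputs_disjoint : forall a b, a != b ->
  [disjoint \bigcup_(j in S a) depset g j & \bigcup_(j in S b) depset g j].

Lemma Pg_ge0 x : 0 <= Pg R g x.
Proof. by rewrite /Pg /pushU divr_ge0 ?ler0n. Qed.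

Lemma sum_Pg : \sum_x Pg R g x = 1.
Proof.
have := prob_pushU R g predT; rewrite /prob /= => ->.
by rewrite -[RHS](@Ex_const1 R 'I_m).
Qed.

Lemma prob_Pg_forall_indep (E : I -> pred (bits n)) :
  (forall a, determined_by (E a) (S a)) ->
  prob (Pg R g) (fun x => [forall a, E a x]) = \prod_a prob (Pg R g) (E a).
Proof.
move=> dE; rewrite prob_pushU.
transitivity (Ex (fun w => \prod_a ((E a (g w))%:R : R))).
  by congr (_ * _); apply: eq_bigr => w _; rewrite natr_forall.
rewrite (Ex_prod_indep (S := fun a => \bigcup_(j in S a) depset g j) _ inputs_disjoint).
  by apply: eq_bigr => a _; rewrite prob_pushU.
move=> a w w' ww'; suff -> : E a (g w) = E a (g w') by [].
apply: dE => j ja.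
by apply: determined_by_depset => k kj; apply: ww'; apply/bigcupP; exists j.
Qed.

Lemma overlap_Pg_unif_le (eps : R) : 0 <= eps ->
  (forall a, eps < tvd (marginal R (S a) (Pg R g)) (unif R _)) ->
  overlap (Pg R g) (unif R (bits n)) <= expR (- eps ^+ 2 / 2) ^+ #|I|.
Proof.
move=> eps0 gap.
pose t a (x : bits n) :=
  unif R _ (restr (S a) x) < marginal R (S a) (Pg R g) (restr (S a) x).
have t_determined a : determined_by (t a) (S a).
  move=> x y xy; rewrite /t; suff -> : restr (S a) x = restr (S a) y by [].
  by apply/ffunP => k; rewrite !ffunE xy // (valP k).
apply: (overlap_le_indep_tests (t := t)) => //.
- exact: Pg_ge0.
- by move=> x; rewrite /unif invr_ge0 ler0n.
- exact: sum_Pg.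
- exact: sum_unif_ffun_bool.
- by move=> h; apply: prob_Pg_forall_indep => a x y /t_determined ->.
- by move=> h; apply: (prob_unif_forall_indep R _ S_disjoint) => a x y /t_determined ->.
move=> a; have := gap a.
rewrite tvd_prob_gt ?sum_marginal ?sum_Pg ?sum_unif_ffun_bool // prob_marginal.
suff -> : prob (unif R _) (fun y => unif R _ y < marginal R (S a) (Pg R g) y) =
          prob (unif R (bits n)) (t a) by [].
have := prob_marginal (unif R (bits n))
  (fun y => unif R _ y < marginal R (S a) (Pg R g) y); rewrite -/(t a) => <-.
by apply: eq_bigr => y _; rewrite marginal_unif.
Qed.

End LocalFunction.

Lemma card_bits n : #|bits n| = (2 ^ n)%N.
Proof. by rewrite card_ffun card_bool card_ord. Qed.

Lemma suppD_card_gt0 n q (Lam : {set 'I_q}) : (q <= n)%N -> Lam != set0 ->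
  (0 < #|suppD n q Lam|)%N.
Proof.
move=> qn /set0Pn[l lLam]; have ln : (l <= n)%N := leq_trans (ltnW (ltn_ord l)) qn.
pose x : bits n := [ffun i : 'I_n => (i < l)%N].
have weight_x : hweight x = l.
  have widen_inj : injective (widen_ord ln) by move=> j j' [] /val_inj.
  rewrite /hweight -[RHS](card_ord l) -(card_imset _ widen_inj).
  apply: eq_card => i; rewrite inE ffunE; apply/idP/imsetP => [il | [j _ ->]].
    by exists (Ordinal il) => //; apply: val_inj.
  by rewrite /= ltn_ord.
apply/card_gt0P; exists x; rewrite inE; apply/existsP; exists l.
by rewrite lLam weight_x (modn_small (ltn_ord l)) /=; apply/eqP.
Qed.

Section UniformOnSupport.
Variables (R : realType) (n q : nat) (Lam : {set 'I_q}).
Hypothesis suppD_gt0 : (0 < #|suppD n q Lam|)%N.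

Lemma sum_Dq : \sum_x Dq R n q Lam x = 1.
Proof.
rewrite /Dq -big_mkcond sumr_const -[LHS]mulr_natr mulVf //.
by rewrite pnatr_eq0 -lt0n.
Qed.

Lemma Dq_le_unif x :
  Dq R n q Lam x <= (#|suppD n q Lam|%:R / 2 ^+ n)^-1 * unif R (bits n) x.
Proof.
have supp_neq0 : (#|suppD n q Lam|%:R : R) != 0 by rewrite pnatr_eq0 -lt0n.
rewrite /unif card_bits natrX invf_div mulrAC divff ?mul1r ?expf_neq0 ?pnatr_eq0 //.
by rewrite /Dq; case: ifP; rewrite ?invr_ge0 ?ler0n.
Qed.

End UniformOnSupport.

Unset Implicit Arguments.

Theorem mainTheorem15 (R : realType) (n m d q r' : nat) (Lam : {set 'I_q})
  (eps : R) (g : bits m -> bits n) (idx : 'I_r' -> 'I_n) :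
  (3 <= q)%N -> (q <= n)%N -> Lam != set0 ->
  0 <= eps -> eps <= 1 ->
  is_local d g ->
  (1 <= r')%N ->
  (forall a b : 'I_r', a != b ->
     [disjoint nbhd_inputs g (idx a) & nbhd_inputs g (idx b)]) ->
  (forall a : 'I_r',
     tvd (marginal R (nbhd g (idx a)) (Pg R g))
         (unif R _) > eps) ->
  let eta : R := #|suppD n q Lam|%:R / 2 ^+ n in
  tvd (Pg R g) (Dq R n q Lam) >= 1 - 2 / eta * expR (- (eps ^+ 2 * r'%:R) / 2).
Proof.
move=> _ qn Lam_neq0 eps0 _ _ _ inputs_disj tvd_gt /=.
set eta : R := #|suppD n q Lam|%:R / 2 ^+ n.
have supp_gt0 := suppD_card_gt0 qn Lam_neq0.
have eta_gt0 : 0 < eta by rewrite divr_gt0 ?exprn_gt0 ?ltr0n.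
have eta_le1 : eta <= 1.
  rewrite ler_pdivrMr ?exprn_gt0 // mul1r -natrX -card_bits ler_nat.
  exact: max_card.
have eta_inv_ge1 : 1 <= eta^-1 by rewrite invf_ge1.
have overlap_PD :=
  overlap_le_scale (@Pg_ge0 R m n g) eta_inv_ge1 (Dq_le_unif R supp_gt0).
have overlap_PU := overlap_Pg_unif_le (S := fun a => nbhd g (idx a))
  (fun a b ab => disjoint_nbhd (inputs_disj a b ab)) inputs_disj eps0 tvd_gt.
rewrite card_ord -expRM_natr mulrAC mulNr in overlap_PU.
rewrite tvd_overlap ?sum_Pg ?sum_Dq //.
set e := expR _ in overlap_PU *.
have eta_inv_e_ge0 : 0 <= eta^-1 * e by rewrite mulr_ge0 ?expR_ge0 ?invr_ge0 ?ltW.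
have : eta^-1 * overlap (Pg R g) (unif R (bits n)) <= eta^-1 * e.
  by rewrite ler_pM2l ?invr_gt0.
have -> : 2 / eta * e = 2 * (eta^-1 * e) by rewrite mulrA.
lra.
Qed.
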